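(* Let $n\ge 2$. The number of MAU pairs $(u,v)$ of binary words with $|u|=|v|=n$ and $\big||u|_c-|v|_c\big|\ge 2$ for all $c\in\{a,b\}$ equals $$2\sum_{r_2=0}^{n-2}\ \sum_{r_1=r_2+2}^{n}{}_{A}N_{O}^{B_{r_2}},$$ where, for each $(r_1,r_2)$, $A=(r_2-r_1,\,r_1-r_2)$, $O=(0,0)$ and $B_{r_2}=(r_2,\,n-r_2)$.
   Context: Let $\Sigma=\{a,b\}$. For a word $w$ and a letter $c$, $|w|_c$ denotes the number of occurrences of $c$ in $w$. Two words $x,y$ are abelian equivalent, written $x\sim_{\mathrm{abl}}y$, if $|x|_c=|y|_c$ for all $c\in\Sigma$. For words $u,v$: a pair $(x,y)$ is an internal abelian-border of $(u,v)$ if $x$ is a nonempty proper suffix of $u$, $y$ is a proper prefix of $v$, and $x\sim_{\mathrm{abl}}y$; it is an external abelian-border of $(u,v)$ if $x$ is a nonempty proper prefix of $u$, $y$ is a proper suffix of $v$, and $x\sim_{\mathrm{abl}}y$. The pair $(u,v)$ is mutually abelian-bordered (MAB) if it has both an internal and an external abelian-border, and mutually abelian-unbordered (MAU) if it has neither. A lattice path is a finite sequence of points of $\mathbb Z^2$ in which each consecutive difference is $(1,0)$ (an east step) or $(0,1)$ (a north step). The word $w(p)\in\Sigma^*$ of a lattice path $p$ records its steps in order, writing $a$ for an east step and $b$ for a north step; conversely, for a point $A\in\mathbb Z^2$ and a word $w$, $p_A(w)$ is the lattice path starting at $A$ whose word is $w$. For lattice paths $p,q$, $p\cap q$ denotes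 the set of lattice points lying on both. For distinct lattice points $A,B,C$, ${}_{A}\mathcal N_{B}^{C}$ is the set of triples $(p,q,p')$ where $p$ is a lattice path from $A$ to $C$, $q$ is a lattice path from $B$ to $C$, $p'=p_B(w(p))$, $p\cap q=\{C\}$ and $q\cap p'=\{B\}$; and ${}_{A}N_{B}^{C}=|{}_{A}\mathcal N_{B}^{C}|$. *)

From mathcomp Require Import all_boot all_order all_algebra.
Set Implicit Arguments. Unset Strict Implicit. Unset Printing Implicit Defensive.
Import Order.TTheory GRing.Theory Num.Theory.

Definition la : bool := false.
Definition lb : bool := true.

Definition occ (w : seq bool) (c : bool) : nat := count_mem c w.

Definition abl (x y : seq bool) : bool := [forall c : bool, occ x c == occ y c].

Definition prefixes (w : seq bool) : seq (seq bool) := [seq take i w | i <- iota 0 (size w).+1].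
Definition suffixes (w : seq bool) : seq (seq bool) := [seq drop i w | i <- iota 0 (size w).+1].

Definition has_int_border (u v : seq bool) : bool :=
  has (fun x => has (fun y =>
     [&& 0 < size x, size x < size u, size y < size v & abl x y]) (prefixes v))
     (suffixes u).

Definition has_ext_border (u v : seq bool) : bool :=
  has (fun x => has (fun y =>
     [&& 0 < size x, size x < size u, size y < size v & abl x y]) (suffixes v))
     (prefixes u).

Definition MAU (u v : seq bool) : bool := ~~ has_int_border u v && ~~ has_ext_border u v.

Definition point := (int * int)%type.

Definition step (P : point) (c : bool) : point :=
  if c then (P.1, (P.2 + 1)%R) else ((P.1 + 1)%R, P.2).

Definition path_of (A : point) (w : seq bool) : seq point := A :: scanl step A w.

Definition path_end (A : point) (w : seq bool) : point := last A (path_of A w).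

Definition dist1 (A C : point) : nat := (`|(C.1 - A.1)%R|%N + `|(C.2 - A.2)%R|%N)%N.

Definition meets_only (p q : seq point) (C : point) : bool :=
  [&& C \in p, C \in q & all (fun z => (z \in q) ==> (z == C)) p].

(* _A N_B^C : triples (p,q,p') with p a path from A to C, q a path from B to C,
   p' = p_B(w(p)), p \cap q = {C}, q \cap p' = {B}.  A lattice path is
   determined by its start point and its word, so p = p_A(w1), q = p_B(w2),
   and every path from A to C has exactly dist1 A C steps. *)
Definition Ntriples (A B C : point) : nat :=
  #|[set wq : (dist1 A C).-tuple bool * (dist1 B C).-tuple bool |
      let p := path_of A wq.1 in
      let q := path_of B wq.2 in
      let p' := path_of B wq.1 in
      [&& path_end A wq.1 == C, path_end B wq.2 == C,
          meets_only p q C & meets_only q p' B]]|.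

From mathcomp Require Import all_boot all_order all_algebra zify.
Set Implicit Arguments. Unset Strict Implicit. Unset Printing Implicit Defensive.
Import Order.TTheory GRing.Theory Num.Theory.

(* Record a word by its prefix counts of a's, and for words x, y of length n
   let [gap x y k] be the difference of these counts after k letters.  For
   |u| = |v| = n take x = v and y = rev u: a length-k internal abelian border
   of (u, v) means [gap k = 0], a length-k external one means [gap k = gap n],
   so (u, v) is MAU iff the gap avoids 0 and its final value at every interior
   time 0 < k < n.
   On the lattice side, A and O both lie on the antidiagonal x + y = 0, so the
   k-th points of p = p_A(x), q = p_O(y) and p' = p_O(x) lie on the same
   antidiagonal and these paths can only meet at equal times.  Comparing first
   coordinates, q meets p after k steps iff [gap k = r1 - r2 = gap n] and meets
   p' iff [gap k = 0], where r1, r2 are the numbers of a's of x and y.  So the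
   triples counted by N correspond to the MAU pairs (u, v) in which v has r1
   a's and u has r2 a's; summing over r1 >= r2 + 2 and using the symmetry
   (x, y) <-> (y, x) for the pairs with r2 >= r1 + 2 gives the formula. *)

Definition aprefix (s : seq bool) (k : nat) : nat := occ (take k s) la.

Definition gap (x y : seq bool) (k : nat) : int :=
  (Posz (aprefix x k) - Posz (aprefix y k))%R.

Definition gap_avoids (n : nat) (x y : seq bool) : bool :=
  [forall k : 'I_n, (0 < k) ==> (gap x y k != 0%R) && (gap x y k != gap x y n)].

Lemma occ_la_lb s : occ s la + occ s lb = size s.
Proof. by elim: s => //= -[] s; rewrite /occ /=; lia. Qed.

Lemma occ_take_drop k s c : occ (take k s) c + occ (drop k s) c = occ s c.
Proof. by rewrite /occ -count_cat cat_take_drop. Qed.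

Lemma occ_rev s c : occ (rev s) c = occ s c.
Proof. by rewrite /occ count_rev. Qed.

Lemma ablE x y : abl x y = (size x == size y) && (occ x la == occ y la).
Proof.
have := occ_la_lb x; have := occ_la_lb y; rewrite /la /lb => hy hx.
apply/forallP/andP => [H | [/eqP sxy /eqP axy] c].
  by have := eqP (H false); have := eqP (H true); split; apply/eqP; lia.
by case: c; apply/eqP; lia.
Qed.

Lemma aprefix0 s : aprefix s 0 = 0.
Proof. by rewrite /aprefix take0. Qed.

Lemma aprefix_oversize s k : size s <= k -> aprefix s k = occ s la.
Proof. by move=> sk; rewrite /aprefix take_oversize. Qed.

Lemma aprefix_rev s k : aprefix (rev s) k = occ (drop (size s - k) s) la.
Proof. by rewrite /aprefix take_rev occ_rev. Qed.

Lemma gap_size x y n : size x = n -> size y = n ->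
  gap x y n = (Posz (occ x la) - Posz (occ y la))%R.
Proof. by move=> sx sy; rewrite /gap !aprefix_oversize ?sx ?sy. Qed.

Lemma gapC x y k : gap y x k = (- gap x y k)%R.
Proof. by rewrite /gap opprB. Qed.

Lemma gap_avoidsP n x y :
  reflect (forall k, 0 < k < n -> gap x y k <> 0%R /\ gap x y k <> gap x y n)
          (gap_avoids n x y).
Proof.
apply: (iffP forallP) => [H k /andP[k0 kn] | H k].
  by have /implyP/(_ k0)/andP[/eqP ? /eqP ?] := H (Ordinal kn).
apply/implyP => k0; have [/eqP ? /eqP ?] := H k (introT andP (conj k0 (ltn_ord k))).
exact/andP.
Qed.

Lemma gap_avoidsC n x y : gap_avoids n y x = gap_avoids n x y.
Proof. by apply/gap_avoidsP/gap_avoidsP => H k /H; rewrite /gap; lia. Qed.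

Lemma has_int_border_gap u v : size u = size v ->
  has_int_border u v = [exists k : 'I_(size v), (0 < k) && (gap v (rev u) k == 0%R)].
Proof.
move=> suv; rewrite /has_int_border /suffixes /prefixes.
apply/hasP/existsP => [[_ /mapP[i _ ->] /hasP[_ /mapP[j _ ->]]] | [k /andP[k0 /eqP gk]]].
  rewrite ablE size_drop size_take_min => /and4P[i0 iu jv /andP[/eqP sij /eqP occij]].
  have jn : j < size v by lia.
  exists (Ordinal jn); rewrite /= /gap aprefix_rev /aprefix (_ : size u - j = i); lia.
have kv := ltn_ord k.
exists (drop (size u - k) u); first by apply/mapP; exists (size u - k) => //; rewrite mem_iota; lia.
apply/hasP; exists (take k v); first by apply/mapP; exists (k : nat) => //; rewrite mem_iota; lia.
rewrite ablE size_drop size_take_min; move: gk; rewrite /gap aprefix_rev /aprefix => gk.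
by apply/and4P; split; try lia; apply/andP; split; apply/eqP; lia.
Qed.

Lemma has_ext_border_gap u v : size u = size v ->
  has_ext_border u v =
  [exists k : 'I_(size v), (0 < k) && (gap v (rev u) k == gap v (rev u) (size v))].
Proof.
move=> suv; rewrite /has_ext_border /suffixes /prefixes gap_size ?size_rev // occ_rev.
have hu := occ_take_drop (size u - _) u la; have hv := occ_take_drop _ v la.
apply/hasP/existsP => [[_ /mapP[i _ ->] /hasP[_ /mapP[j _ ->]]] | [k /andP[k0 /eqP gk]]].
  rewrite ablE size_drop size_take_min => /and4P[i0 iu jv /andP[/eqP sij /eqP occij]].
  have jn : j < size v by lia.
  exists (Ordinal jn); move: (hu j) (hv j).
  by rewrite /= /gap aprefix_rev /aprefix (_ : size u - j = i); lia.
have kv := ltn_ord k.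
exists (take (size u - k) u); first by apply/mapP; exists (size u - k) => //; rewrite mem_iota; lia.
apply/hasP; exists (drop k v); first by apply/mapP; exists (k : nat) => //; rewrite mem_iota; lia.
move: gk (hu k) (hv k); rewrite /gap aprefix_rev /aprefix => gk h1 h2.
rewrite ablE size_drop size_take_min.
by apply/and4P; split; try lia; apply/andP; split; apply/eqP; lia.
Qed.

Lemma MAU_gap_avoids u v : size u = size v -> MAU u v = gap_avoids (size v) v (rev u).
Proof.
move=> suv; rewrite /MAU has_int_border_gap // has_ext_border_gap //.
apply/andP/forallP => [[/existsPn H1 /existsPn H2] k | H].
  by apply/implyP => k0; move: (H1 k) (H2 k); rewrite k0 /= => /negPf-> /negPf->.
by split; apply/existsPn => k; apply/negP => /andP[k0 /eqP e];
  move: (H k); rewrite k0 e eqxx ?andbF.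
Qed.

Lemma occ_dist_ge m u v : size u = size v ->
  [forall c : bool, m <= `|(Posz (occ u c) - Posz (occ v c))%R|] =
  (m <= `|(Posz (occ u la) - Posz (occ v la))%R|).
Proof.
move=> suv; have := occ_la_lb u; have := occ_la_lb v; rewrite /la /lb => hv hu.
by apply/forallP/idP => [/(_ false) // | H [] //]; lia.
Qed.

Lemma card_MAU_far n :
  #|[set uv : n.-tuple bool * n.-tuple bool |
      MAU uv.1 uv.2 &&
      [forall c : bool, (2 <= `|(Posz (occ uv.1 c) - Posz (occ uv.2 c))%R|)%N]]|
  = #|[set xy : n.-tuple bool * n.-tuple bool |
        gap_avoids n xy.1 xy.2 && (2 <= `|gap xy.1 xy.2 n|)%N]|.
Proof.
pose f (uv : n.-tuple bool * n.-tuple bool) := (uv.2, [tuple of rev uv.1]).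
have f_inj : injective f.
  by move=> [u v] [u' v'] [-> /(congr1 rev)]; rewrite !revK => /val_inj ->.
rewrite -[RHS](card_preimset _ f_inj); apply: eq_card => -[u v]; rewrite !inE /=.
rewrite MAU_gap_avoids ?occ_dist_ge ?gap_size ?size_rev ?size_tuple // occ_rev.
by congr (_ && _); lia.
Qed.

Lemma card_gap_abs_ge2 n :
  #|[set xy : n.-tuple bool * n.-tuple bool |
      gap_avoids n xy.1 xy.2 && (2 <= `|gap xy.1 xy.2 n|)%N]|
  = 2 * #|[set xy : n.-tuple bool * n.-tuple bool |
             gap_avoids n xy.1 xy.2 && (2 <= gap xy.1 xy.2 n)%R]|.
Proof.
set S := [set xy | _ && (2 <= _)%R].
pose swap (xy : n.-tuple bool * n.-tuple bool) := (xy.2, xy.1).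
have swap_inj : injective swap by move=> [? ?] [? ?] [-> ->].
have -> : [set xy : n.-tuple bool * n.-tuple bool |
            gap_avoids n xy.1 xy.2 && (2 <= `|gap xy.1 xy.2 n|)%N] = S :|: swap @^-1: S.
  by apply/setP => -[x y]; rewrite !inE /= gap_avoidsC gapC; case: gap_avoids => //=; lia.
rewrite cardsU card_preimset // (_ : S :&: _ = set0) ?cards0 ?subn0; first lia.
by apply/setP => -[x y]; rewrite !inE /= gapC; lia.
Qed.

Definition lattice_pt (A : point) (w : seq bool) (k : nat) : point :=
  ((A.1 + Posz (aprefix w k))%R, (A.2 + Posz (occ (take k w) lb))%R).

Lemma lattice_pt0 (A : point) w : lattice_pt A w 0 = A.
Proof. by case: A => a1 a2; rewrite /lattice_pt /aprefix take0 /= !addr0. Qed.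

Lemma lattice_pt_cons (A : point) c w k :
  lattice_pt A (c :: w) k.+1 = lattice_pt (step A c) w k.
Proof.
by case: A => a1 a2; case: c; rewrite /lattice_pt /step /aprefix /occ /=; f_equal; lia.
Qed.

Lemma mem_path_of (A z : point) w :
  z \in path_of A w <-> exists2 k, k <= size w & z = lattice_pt A w k.
Proof.
elim: w A z => [|c w IH] A z.
  by rewrite in_cons in_nil orbF; split=> [/eqP->|[k]]; [exists 0 | case: k];
     rewrite ?lattice_pt0 => // _ ->.
rewrite (_ : path_of A (c :: w) = A :: path_of (step A c) w) // in_cons.
split=> [/orP[/eqP-> | /IH[k kw ->]] | [[|k] kw ->]].
- by exists 0; rewrite ?lattice_pt0.
- by exists k.+1; rewrite ?lattice_pt_cons.
- by rewrite lattice_pt0 eqxx.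
- by apply/orP; right; apply/IH; exists k; rewrite ?lattice_pt_cons.
Qed.

Lemma path_end_lattice_pt (A : point) w : path_end A w = lattice_pt A w (size w).
Proof.
elim: w A => [|c w IH] A; first by rewrite lattice_pt0.
by rewrite /= lattice_pt_cons -IH.
Qed.

Lemma lattice_pt_antidiag (A : point) w k : k <= size w ->
  ((lattice_pt A w k).1 + (lattice_pt A w k).2 = A.1 + A.2 + Posz k)%R.
Proof.
by move=> kw; have := occ_la_lb (take k w); rewrite size_take_min /lattice_pt /aprefix /=; lia.
Qed.

Lemma lattice_pt_index (A B : point) w w' k j : (A.1 + A.2 = B.1 + B.2)%R ->
  k <= size w -> j <= size w' -> lattice_pt A w k = lattice_pt B w' j -> k = j.
Proof.
move=> AB kw jw' e; have := lattice_pt_antidiag A kw.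
by rewrite e lattice_pt_antidiag // AB => /addrI [].
Qed.

Lemma lattice_pt_eq (A B : point) w w' k : (A.1 + A.2 = B.1 + B.2)%R ->
  k <= size w -> k <= size w' ->
  (lattice_pt A w k == lattice_pt B w' k) =
  (A.1 + Posz (aprefix w k) == B.1 + Posz (aprefix w' k))%R.
Proof.
move=> AB kw kw'; have := lattice_pt_antidiag A kw; have := lattice_pt_antidiag B kw'.
rewrite /lattice_pt /= xpair_eqE => hB hA; apply/andb_idr => /eqP e.
by apply/eqP; move: hA; rewrite e AB -hB => /addrI.
Qed.

Lemma meets_only_at (A B C : point) w w' n i : (A.1 + A.2 = B.1 + B.2)%R ->
  size w = n -> size w' = n -> i <= n -> lattice_pt A w i = C ->
  meets_only (path_of A w) (path_of B w') C =
  [forall k : 'I_n.+1,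
     (A.1 + Posz (aprefix w k) == B.1 + Posz (aprefix w' k))%R == (k == i :> nat)].
Proof.
move=> AB sw sw' iN <-.
have meet k : k <= n ->
    (lattice_pt A w k == lattice_pt B w' k) =
    (A.1 + Posz (aprefix w k) == B.1 + Posz (aprefix w' k))%R.
  by move=> kn; apply: lattice_pt_eq; rewrite ?sw ?sw'.
apply/and3P/forallP => [[_ /mem_path_of[j jn e] /allP common] k | H].
  have iw : i <= size w by rewrite sw.
  have ji : i = j := lattice_pt_index AB iw jn e.
  rewrite -(meet k (ltn_ord k)).
  have [->|kNi] := eqVneq (k : nat) i; first by rewrite e ji !eqxx.
  rewrite eqbF_neg; apply/eqP => ekk; move/eqP: kNi; apply.
  have kn : k <= size w by rewrite sw -ltnS.
  have kp : lattice_pt A w k \in path_of A w by apply/mem_path_of; exists k.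
  have kq : lattice_pt A w k \in path_of B w'.
    by apply/mem_path_of; exists k => //; rewrite sw'; exact: ltn_ord k.
  move: (common _ kp); rewrite kq => /eqP eki.
  exact: lattice_pt_index (erefl _) kn iw eki.
have coincide k : k <= n -> (lattice_pt A w k == lattice_pt B w' k) = (k == i).
  by move=> kn; rewrite meet //; exact: eqP (H (@Ordinal n.+1 k kn)).
split.
- by apply/mem_path_of; exists i; rewrite ?sw.
- by apply/mem_path_of; exists i; rewrite ?sw' //; apply/eqP; rewrite coincide.
apply/allP => _ /mem_path_of[k kn ->]; apply/implyP => /mem_path_of[j jn e].
rewrite sw in kn; rewrite sw' in jn.
have kj : k = j by apply: (lattice_pt_index AB _ _ e); rewrite ?sw ?sw'.
by move/eqP: e; rewrite -kj coincide // => /eqP->.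
Qed.

Lemma triple_condition n r1 r2 w1 w2 : r1 <= n -> r1 != r2 -> size w1 = n -> size w2 = n ->
  let A : point := ((Posz r2 - Posz r1)%R, (Posz r1 - Posz r2)%R) in
  let O : point := (0%R, 0%R) in
  let C : point := (Posz r2, (Posz n - Posz r2)%R) in
  [&& path_end A w1 == C, path_end O w2 == C,
      meets_only (path_of A w1) (path_of O w2) C &
      meets_only (path_of O w2) (path_of O w1) O]
  = [&& occ w1 la == r1, occ w2 la == r2 & gap_avoids n w1 w2].
Proof.
move=> r1n r12 s1 s2 A O C.
have AO : (A.1 + A.2 = O.1 + O.2)%R by rewrite /= -opprB addNr.
have end1 : (lattice_pt A w1 n == C) = (occ w1 la == r1).
  rewrite /lattice_pt /aprefix !take_oversize ?s1 // xpair_eqE /=.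
  by have := occ_la_lb w1; rewrite s1; lia.
have end2 : (lattice_pt O w2 n == C) = (occ w2 la == r2).
  rewrite /lattice_pt /aprefix !take_oversize ?s2 // xpair_eqE /=.
  by have := occ_la_lb w2; rewrite s2; lia.
rewrite !path_end_lattice_pt s1 s2 end1 end2.
case: (occ w1 la =P r1) => c1 //=; case: (occ w2 la =P r2) => c2 //=.
have CA : lattice_pt A w1 n = C by apply/eqP; rewrite end1 c1.
rewrite (meets_only_at AO s1 s2 (leqnn n) CA).
rewrite (meets_only_at (erefl _) s2 s1 (leq0n n) (lattice_pt0 _ _)).
have r2n : r2 <= n by rewrite -c2 -s2 count_size.
have gn : gap w1 w2 n = (Posz r1 - Posz r2)%R by rewrite gap_size // c1 c2.
apply/andP/gap_avoidsP => [[/forallP H1 /forallP H2] k /andP[k0 kn] | H].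
  move: (H1 (@Ordinal n.+1 k (ltnW kn))) (H2 (@Ordinal n.+1 k (ltnW kn))).
  by rewrite /= gn /gap; lia.
split; apply/forallP => -[k /= kn]; move: (H k).
all: have [-> _|k0] := posnP k; first by rewrite !aprefix0 /=; lia.
all: have [kn' /(_ isT)|kN _] := ltnP k n; first by rewrite gn /gap; lia.
all: have -> : k = n by lia.
all: by rewrite !aprefix_oversize ?s1 ?s2 // c1 c2; lia.
Qed.

Lemma Ntriples_gap_avoids n r1 r2 : r2 < r1 <= n ->
  Ntriples ((Posz r2 - Posz r1)%R, (Posz r1 - Posz r2)%R) (0%R, 0%R)
           (Posz r2, (Posz n - Posz r2)%R)
  = #|[set xy : n.-tuple bool * n.-tuple bool |
        [&& occ xy.1 la == r1, occ xy.2 la == r2 & gap_avoids n xy.1 xy.2]]|.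
Proof.
case/andP=> r21 r1n; rewrite /Ntriples.
have -> : dist1 ((Posz r2 - Posz r1)%R, (Posz r1 - Posz r2)%R)
                (Posz r2, (Posz n - Posz r2)%R) = n by rewrite /dist1 /=; lia.
have -> : dist1 (0%R, 0%R) (Posz r2, (Posz n - Posz r2)%R) = n by rewrite /dist1 /=; lia.
apply: eq_card => -[w1 w2]; rewrite !inE /=.
by apply: triple_condition; rewrite ?size_tuple // neq_ltn r21 orbT.
Qed.

Lemma sum_nat_eq_indicator m k c (b : nat -> bool) :
  \sum_(m <= i < k) ((c == i) && b i : nat) = ((m <= c < k) && b c : nat).
Proof.
rewrite (eq_bigr (fun i => if i == c then (b c : nat) else 0)) => [|i _].
  by rewrite -big_mkcond big_nat1_eq; case: ifP.
by rewrite eq_sym; case: eqP => [->|].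
Qed.

Lemma sum_card_by_values (X : finType) (P : pred X) (f g : X -> nat) n :
  (forall x, f x <= n) ->
  \sum_(0 <= j < n.-1) \sum_(j.+2 <= i < n.+1) #|[set x | [&& f x == i, g x == j & P x]]|
  = #|[set x | P x && (g x + 2 <= f x)]|.
Proof.
move=> fn.
have cardE (Q : pred X) : #|[set x | Q x]| = \sum_x (Q x : nat).
  by rewrite -sum1_card big_mkcond; apply: eq_bigr => x _; rewrite inE; case: (Q x).
rewrite cardE; transitivity (\sum_x \sum_(0 <= j < n.-1)
    \sum_(j.+2 <= i < n.+1) ([&& f x == i, g x == j & P x] : nat)).
  symmetry; rewrite exchange_big; apply: eq_bigr => j _.
  by rewrite exchange_big; apply: eq_bigr => i _; rewrite cardE.
apply: eq_bigr => x _.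
rewrite (eq_bigr (fun j : nat => ((g x == j) && ((j.+2 <= f x < n.+1) && P x)) : nat)) => [|j _].
  by rewrite sum_nat_eq_indicator; have := fn x; case: (P x); rewrite ?andbF //=; lia.
by rewrite sum_nat_eq_indicator andbCA.
Qed.

Theorem mainTheorem11 (n : nat) (hn : (2 <= n)%N) :
  #|[set uv : n.-tuple bool * n.-tuple bool |
      MAU uv.1 uv.2 &&
      [forall c : bool, (2 <= `|(Posz (occ uv.1 c) - Posz (occ uv.2 c))%R|)%N]]|
  = (2 * \sum_(0 <= r2 < n.-1)
           \sum_(r2.+2 <= r1 < n.+1)
              Ntriples ((Posz r2 - Posz r1)%R, (Posz r1 - Posz r2)%R) (0%R, 0%R)
                       (Posz r2, (Posz n - Posz r2)%R))%N.
Proof.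
rewrite card_MAU_far card_gap_abs_ge2; congr (2 * _).
have -> : #|[set xy : n.-tuple bool * n.-tuple bool |
              gap_avoids n xy.1 xy.2 && (2 <= gap xy.1 xy.2 n)%R]|
        = #|[set xy : n.-tuple bool * n.-tuple bool |
              gap_avoids n xy.1 xy.2 && (occ xy.2 la + 2 <= occ xy.1 la)]|.
  by apply: eq_card => xy; rewrite !inE gap_size ?size_tuple //; lia.
have occ_le (xy : n.-tuple bool * n.-tuple bool) : occ xy.1 la <= n.
  by have := count_size (pred1 la) xy.1; rewrite size_tuple.
rewrite -(sum_card_by_values
  (fun xy : n.-tuple bool * n.-tuple bool => gap_avoids n xy.1 xy.2) (fun xy => occ xy.2 la) occ_le).
apply: eq_big_nat => r2 _; apply: eq_big_nat => r1 /andP[r21 r1n].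
by rewrite Ntriples_gap_avoids //; lia.
Qed.
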